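(* Let $F:\mathbb{R}^n\to\mathbb{R}^n$ and $\phi:\mathbb{R}^n\to\mathbb{R}$ be smooth, let $p\ge1$, $d>0$, and $\Omega_d=\{x\in\mathbb{R}^n:|x|<d\}$. Let $\delta_0,\delta_1,\dots,\delta_p\ge0$ satisfy $$\mathcal{L}_F^p\phi(z)\le\sum_{i=0}^{p-1}\delta_i\mathcal{L}_F^i\phi(z)+\delta_p\quad\text{for all }z\in\Omega_d.$$ For $\xi_0\in\Omega_d$ let $\xi(t;\xi_0)$ denote the solution of $\dot\xi=F(\xi)$ with $\xi(0)=\xi_0$, and let $\tau_{\xi_0}=\sup\{\tau>0:\xi(t;\xi_0)\in\Omega_d\ \forall t\in[0,\tau)\}$. Let $A$ be the $(p+1)\times(p+1)$ matrix whose rows $1,\dots,p-1$ are $e_2^\top,\dots,e_p^\top$ (i.e. $A_{k,k+1}=1$ for $k=1,\dots,p-1$, other entries of these rows zero), whose $p$-th row is $(\delta_0,\delta_1,\dots,\delta_{p-1},1)$, and whose last row is zero. Let $\psi(y,t)=e^{At}y$ be the solution of $\dot\psi=A\psi$ with initial condition $y$, and $\psi_1(y,t)$ its first component. Define $y(\xi_0)=\big(\phi(\xi_0),\mathcal{L}_F\phi(\xi_0),\dots,\mathcal{L}_F^{p-1}\phi(\xi_0),\delta_p\big)^\top$. Then for all $\xi_0\in\Omega_d$, $$\phi(\xi(t;\xi_0))\le\psi_1(y(\xi_0),t)\quad\text{for all }t\in[0,\tau_{\xi_0}).$$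
   Context: $\mathcal{L}_F\phi$ denotes the Lie derivative of $\phi$ along $F$, $\mathcal{L}_F^k\phi=\mathcal{L}_F(\mathcal{L}_F^{k-1}\phi)$, $\mathcal{L}_F^0\phi=\phi$. $|\cdot|$ is the Euclidean norm. *)

From HB Require Import structures.
From mathcomp Require Import all_boot all_order all_algebra.
From mathcomp Require Import all_classical all_reals all_analysis.
Set Implicit Arguments. Unset Strict Implicit. Unset Printing Implicit Defensive.
Import Order.TTheory GRing.Theory Num.Theory.
Import numFieldNormedType.Exports.
Local Open Scope ring_scope.

Fixpoint Ck {R : realType} {V W : normedModType R} (k : nat) (f : V -> W) : Prop :=
  match k with
  | 0%N => continuous f
  | k'.+1 => (forall x, differentiable f x) /\
             (forall v : V, Ck k' (fun x => 'd f x v))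
  end.

Definition smooth {R : realType} {V W : normedModType R} (f : V -> W) : Prop :=
  forall k, Ck k f.

Definition enorm {R : realType} {n : nat} (x : 'rV[R]_n) : R :=
  Num.sqrt (\sum_(i < n) x ord0 i ^+ 2).

Definition Omega {R : realType} (n : nat) (d : R) : set 'rV[R]_n :=
  [set x | enorm x < d].
Arguments Omega {R} n d.

Definition Lie {R : realType} {n : nat} (F : 'rV[R]_n -> 'rV[R]_n)
  (phi : 'rV[R]_n -> R) : 'rV[R]_n -> R :=
  fun x => 'd phi x (F x).

Fixpoint Lie_iter {R : realType} {n : nat} (F : 'rV[R]_n -> 'rV[R]_n)
  (phi : 'rV[R]_n -> R) (k : nat) : 'rV[R]_n -> R :=
  match k with
  | 0%N => phi
  | k'.+1 => Lie F (Lie_iter F phi k')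
  end.

(* The (p+1)x(p+1) matrix A (0-based indices): A k (k+1) = 1 for k < p-1,
   row p-1 = (delta_0, ..., delta_{p-1}, 1), row p = 0. *)
Definition Amx {R : realType} (p : nat) (delta : nat -> R) : 'M[R]_(p.+1) :=
  \matrix_(i, j)
    if (i.+1 < p)%N then (if j == i.+1 :> nat then 1 else 0)
    else if i == p.-1 :> nat then
      (if (j < p)%N then delta j else 1)
    else 0.

Definition yvec {R : realType} {n : nat} (p : nat) (delta : nat -> R)
  (F : 'rV[R]_n -> 'rV[R]_n) (phi : 'rV[R]_n -> R) (x0 : 'rV[R]_n)
  : 'cV[R]_(p.+1) :=
  \col_(i < p.+1) (if (i < p)%N then Lie_iter F phi i x0 else delta p).

From HB Require Import structures.
From mathcomp Require Import all_boot all_order all_algebra.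
From mathcomp Require Import all_classical all_reals all_analysis.
From mathcomp Require Import ring lra zify.
Import Order.TTheory GRing.Theory Num.Theory.
Import numFieldNormedType.Exports.
Local Open Scope ring_scope.
Local Open Scope classical_set_scope.

(* Put w_i := psi_i - (L_F^i phi) o xi for i < p.  Along the trajectory,
   w_i' = w_(i+1) for i < p - 1, and, because the last component of psi stays
   equal to delta_p, the hypothesis on L_F^p phi gives
   w_(p-1)' >= sum_j delta_j w_j.  With delta_j >= 0 this cooperative system
   keeps the w_i nonnegative: the penalty V := sum_i min(w_i, 0)^2 vanishes at
   time 0 and satisfies V' <= K V, hence V = 0 by Gronwall, and w_0 >= 0 is
   the claim. *)

Section Ck.
Context {R : realType}.

Lemma CkW (V W : normedModType R) k (f : V -> W) : Ck k.+1 f -> Ck k f.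
Proof.
elim: k f => [|k IH] f [df Cdf] /=; first by move=> x; exact: differentiable_continuous.
by split=> // v; apply: IH.
Qed.

Lemma Ck_cst (V W : normedModType R) k (a : W) : Ck k (fun _ : V => a).
Proof.
elim: k a => [|k IH] a /=; first by move=> x; exact: cvg_cst.
split=> [x|v]; first exact: differentiable_cst.
under eq_fun do rewrite diff_cst; exact: IH.
Qed.

Lemma CkD (V W : normedModType R) k (f g : V -> W) : Ck k f -> Ck k g -> Ck k (f + g).
Proof.
elim: k f g => [|k IH] f g /=.
  by move=> cf cg x; apply: continuousD; [exact: cf|exact: cg].
move=> [df Cdf] [dg Cdg]; split=> [x|v]; first exact: differentiableD.
have -> : (fun x => 'd (f + g) x v) = (fun x => 'd f x v) + (fun x => 'd g x v).
  by apply: funext => x; rewrite diffD.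
exact: IH.
Qed.

Lemma Ck_sum (V W : normedModType R) k m (f : 'I_m -> V -> W) :
  (forall i, Ck k (f i)) -> Ck k (\sum_(i < m) f i).
Proof.
move=> Cf; elim/big_ind: _ => //; [exact: Ck_cst | exact: CkD].
Qed.

Lemma CkM (V : normedModType R) k (f g : V -> R) : Ck k f -> Ck k g -> Ck k (f * g).
Proof.
elim: k f g => [|k IH] f g /=.
  by move=> cf cg x; apply: continuousM; [exact: cf|exact: cg].
move=> Cf Cg; have [df Cdf] := Cf; have [dg Cdg] := Cg.
split=> [x|v]; first exact: differentiableM.
have -> : (fun x => 'd (f * g) x v) =
    f * (fun x => 'd g x v) + g * (fun x => 'd f x v).
  by apply: funext => x; rewrite diffM.
by apply: CkD; apply: IH => //; exact: CkW.
Qed.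

Lemma Ck_comp_linear (V W W' : normedModType R) k (f : {linear W -> W'}) (g : V -> W) :
  continuous f -> Ck k g -> Ck k (f \o g).
Proof.
move=> cf; elim: k g => [|k IH] g /=.
  by move=> cg x; apply: continuous_comp; [exact: cg|exact: cf].
move=> [dg Cdg]; split=> [x|v].
  by apply: differentiable_comp => //; exact: linear_differentiable.
have -> : (fun x => 'd (f \o g) x v) = f \o (fun x => 'd g x v).
  apply: funext => x.
  by rewrite diff_comp ?diff_lin //; exact: linear_differentiable.
exact: IH.
Qed.

Lemma Ck_mx_entry (V : normedModType R) k m n (F : V -> 'M[R]_(m, n)) i j :
  Ck k F -> Ck k (fun x => F x i j).
Proof.
have entry_linear : linear (fun N : 'M[R]_(m, n) => N i j).
  by move=> a A B; rewrite !mxE.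
pose entry : {linear 'M[R]_(m, n) -> R} :=
  HB.pack (fun N : 'M[R]_(m, n) => N i j) (GRing.isLinear.Build _ _ _ _ _ entry_linear).
exact: (@Ck_comp_linear _ _ R k entry F (@coord_continuous R m n i j)).
Qed.

Lemma linear_rowE n (f : {linear 'rV[R]_n -> R}) (v : 'rV[R]_n) :
  f v = \sum_(j < n) v ord0 j * f (delta_mx ord0 j).
Proof.
by rewrite {1}(row_sum_delta v) linear_sum; apply: eq_bigr => j _; rewrite linearZ.
Qed.

Lemma Ck_Lie n k (F : 'rV[R]_n -> 'rV[R]_n) (g : 'rV[R]_n -> R) :
  Ck k.+1 g -> Ck k F -> Ck k (Lie F g).
Proof.
move=> [_ Cdg] CF.
have -> : Lie F g = \sum_(j < n) (fun x => F x ord0 j) * (fun x => 'd g x (delta_mx ord0 j)).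
  by apply: funext => x; rewrite /Lie fct_sumE; exact: linear_rowE.
by apply: Ck_sum => j; apply: CkM; [exact: Ck_mx_entry | exact: Cdg].
Qed.

Lemma smooth_Lie_iter n (F : 'rV[R]_n -> 'rV[R]_n) (phi : 'rV[R]_n -> R) i :
  smooth F -> smooth phi -> smooth (Lie_iter F phi i).
Proof. by move=> sF sphi; elim: i => [|i IH] //= k; exact: Ck_Lie. Qed.

End Ck.

Section RealDerivatives.
Context {R : realType}.

Lemma is_derive_diff_comp (V W : normedModType R) (xi : R -> V) (g : V -> W) s v :
  is_derive s (1 : R) xi v -> differentiable g (xi s) ->
  is_derive s (1 : R) (g \o xi) ('d g (xi s) v).
Proof.
move=> [dxi <-] dg.
have dxi_diff : differentiable xi s by apply/derivable1_diffP.
have dgxi : differentiable (g \o xi) s by exact: differentiable_comp.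
apply: DeriveDef; first exact/derivable1_diffP.
by rewrite deriveE // diff_comp // deriveE.
Qed.

Lemma is_derive_sqr_remainder (f : R -> R) x c :
  (forall e, `|f (e + x) - f x - c * e| <= e ^+ 2) -> is_derive x 1 f c.
Proof.
move=> fE.
have fc : (fun h : R => h^-1 *: ((f \o shift x) (h *: 1) - f x)) @ 0^' --> c.
  apply/cvgrPdist_lt => eps eps0; near=> e.
  have e0 : e != 0 by near: e; exact: nbhs_dnbhs_neq.
  have ee : `|e| < eps by near: e; exact: dnbhs0_lt.
  rewrite /= /shift /= [e%:A]mulr1 [_ *: _]/GRing.scale /=.
  have -> : c - e^-1 * (f (e + x) - f x) = - (e^-1 * (f (e + x) - f x - c * e)).
    by field.
  rewrite normrN normrM normfV; apply: le_lt_trans ee.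
  rewrite ler_pdivrMl ?normr_gt0 // -normrM -expr2 (ger0_norm (sqr_ge0 e)).
  exact: fE.
apply: DeriveDef; first by apply/cvg_ex; exists c.
exact: cvg_lim fc.
Unshelve. all: by end_near.
Qed.

Lemma is_derive_le0_nincr (f df : R -> R) (a b : R) : a <= b ->
  (forall x, a <= x <= b -> is_derive x 1 f (df x)) ->
  (forall x, a <= x <= b -> df x <= 0) -> f b <= f a.
Proof.
move=> ab fD df_le0.
have inab x : a < x < b -> a <= x <= b by case/andP => ax xb; rewrite !ltW.
apply: (@ler0_derive1_le_cc _ f a b); rewrite ?in_itv /= ?lexx ?ab //.
- by move=> x; rewrite in_itv /= => /inab /fD [].
- move=> x; rewrite in_itv /= => /inab xab.
  by rewrite derive1E (@derive_val _ _ _ _ _ _ _ (fD x xab)); exact: df_le0.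
- apply: derivable_within_continuous => x; rewrite in_itv /= => xab.
  by case: (fD x xab).
Qed.

Lemma gronwall {f df : R -> R} {K a b : R} : a <= b ->
  (forall x, a <= x <= b -> is_derive x 1 f (df x)) ->
  (forall x, a <= x <= b -> df x <= K * f x) ->
  f b <= expR (K * (b - a)) * f a.
Proof.
move=> ab fD dfK.
pose g x := expR (- K * x) * f x.
have gD x : a <= x <= b -> is_derive x 1 g (expR (- K * x) * (df x - K * f x)).
  move=> xab.
  have eD : is_derive x 1 (fun y => expR (- K * y)) (expR (- K * x) * - K).
    apply: (@is_derive1_comp _ expR (fun y => - K * y)).
    by rewrite -[X in is_derive _ _ _ X]mulr1; apply: is_deriveZ.
  by apply: is_derive_eq (is_deriveM eD (fD x xab)) _; rewrite /GRing.scale /=; ring.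
have gba : g b <= g a.
  apply: (@is_derive_le0_nincr g (fun x => expR (- K * x) * (df x - K * f x)) a b ab gD).
  move=> x xab.
  by rewrite mulr_ge0_le0 ?expR_ge0 // subr_le0; exact: dfK.
rewrite -(ler_pM2l (expR_gt0 (- K * b))) mulrA -expRD.
by rewrite (_ : _ + _ = - K * a) //; ring.
Qed.

Lemma is_derive_Lie_iter_comp {n} {F : 'rV[R]_n -> 'rV[R]_n} {phi : 'rV[R]_n -> R}
    {xi : R -> 'rV[R]_n} {s : R} i :
  smooth F -> smooth phi -> is_derive s 1 xi (F (xi s)) ->
  is_derive s 1 (Lie_iter F phi i \o xi) (Lie_iter F phi i.+1 (xi s)).
Proof.
move=> sF sphi xiD; apply: is_derive_diff_comp xiD _.
exact: (smooth_Lie_iter _ _ _ i sF sphi 1).1.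
Qed.

End RealDerivatives.

Section NegativePart.
Context {R : realType}.

Definition sqr_negpart (x : R) : R := Num.min x 0 ^+ 2.

Lemma sqr_negpart_ge0 x : 0 <= sqr_negpart x.
Proof. exact: sqr_ge0. Qed.

Lemma sqr_negpart_eq0 x : (sqr_negpart x == 0) = (0 <= x).
Proof.
by rewrite sqrf_eq0; case: ltP => [/lt_eqF|_]; rewrite ?eqxx.
Qed.

Lemma is_derive_sqr_negpart (x : R) : is_derive x 1 sqr_negpart (2 * Num.min x 0).
Proof.
apply: is_derive_sqr_remainder => e; rewrite /sqr_negpart /Num.min ler_norml.
by case: ltP => ?; case: ltP => ?; apply/andP; split; nra.
Qed.

Lemma negpart_mulr_le a b : 2 * Num.min a 0 * b <= sqr_negpart a + sqr_negpart b.
Proof.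
rewrite /sqr_negpart; set ma := Num.min a 0; set mb := Num.min b 0.
have : ma * (b - mb) <= 0 by rewrite mulr_le0_ge0 ?subr_ge0 ?ge_min ?lexx ?orbT.
have := sqr_ge0 (ma - mb); nra.
Qed.

End NegativePart.

Section ChainComparison.
Context {R : realType}.
Context {p : nat} {delta : nat -> R} {w dw : nat -> R -> R} {t : R}.
Hypothesis delta_ge0 : forall j, (j < p)%N -> 0 <= delta j.
Hypothesis w_derive : forall {i r}, (i < p)%N -> 0 <= r <= t -> is_derive r 1 (w i) (dw i r).
Hypothesis dw_shift : forall i r, (i.+1 < p)%N -> 0 <= r <= t -> dw i r = w i.+1 r.
Hypothesis dw_last : forall r, 0 <= r <= t -> \sum_(j < p) delta j * w j r <= dw p.-1 r.
Hypothesis w0_ge0 : forall i, (i < p)%N -> 0 <= w i 0.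

Let penalty := \sum_(i < p) (fun r => sqr_negpart (w i r)).
Let dpenalty r := \sum_(i < p) 2 * Num.min (w i r) 0 * dw i r.

Let penaltyE r : penalty r = \sum_(i < p) sqr_negpart (w i r).
Proof. by rewrite /penalty fct_sumE. Qed.

Lemma sqr_negpart_le_penalty i r : (i < p)%N -> sqr_negpart (w i r) <= penalty r.
Proof.
move=> ip; rewrite penaltyE (bigD1 (Ordinal ip)) //= lerDl.
by apply: sumr_ge0 => j _; exact: sqr_negpart_ge0.
Qed.

Lemma penalty_is_derive r : 0 <= r <= t -> is_derive r 1 penalty (dpenalty r).
Proof.
move=> rt; apply: is_derive_sum => i.
exact: is_derive1_comp (is_derive_sqr_negpart _) (w_derive (ltn_ord i) rt).
Qed.

Lemma dpenalty_le r : 0 <= r <= t ->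
  dpenalty r <= (2 * (1 + \sum_(j < p) delta j) * p%:R) * penalty r.
Proof.
move=> rt; set S := \sum_(j < p) delta j.
have S_ge0 : 0 <= S by apply: sumr_ge0 => j _; exact: delta_ge0.
have P_ge0 : 0 <= penalty r by rewrite penaltyE; apply: sumr_ge0 => j _; exact: sqr_negpart_ge0.
have pairP a b : (a < p)%N -> (b < p)%N ->
    sqr_negpart (w a r) + sqr_negpart (w b r) <= 2 * penalty r.
  by move=> ap bp; rewrite mulr2n mulrDl mul1r lerD // sqr_negpart_le_penalty.
have term_le (i : 'I_p) : 2 * Num.min (w i r) 0 * dw i r <= 2 * (1 + S) * penalty r.
  have [ip|] := ltnP i.+1 p.
    rewrite dw_shift //; apply: le_trans (negpart_mulr_le _ _) _.
    by apply: le_trans (pairP _ _ (ltn_ord i) ip) _; nra.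
  move=> p_le; have i_last : (i : nat) = p.-1 by have := ltn_ord i; lia.
  have mi_le0 : Num.min (w i r) 0 <= 0 by rewrite ge_min lexx orbT.
  apply: (@le_trans _ _ (2 * Num.min (w i r) 0 * \sum_(j < p) delta j * w j r)).
    by rewrite -!mulrA ler_pM2l // ler_wnM2l // i_last; exact: dw_last.
  rewrite mulr_sumr.
  apply: (@le_trans _ _ (\sum_(j < p) delta j * (2 * penalty r))).
    apply: ler_sum => j _; rewrite mulrCA ler_wpM2l ?delta_ge0 //.
    exact: le_trans (negpart_mulr_le _ _) (pairP _ _ (ltn_ord i) (ltn_ord j)).
  by rewrite -mulr_suml -/S; nra.
rewrite /dpenalty; apply: (@le_trans _ _ (\sum_(i < p) 2 * (1 + S) * penalty r)).
  by apply: ler_sum => i _; exact: term_le.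
by rewrite sumr_const card_ord -[_ *+ p]mulr_natr mulrAC.
Qed.

Theorem chain_comparison : 0 <= t -> forall i, (i < p)%N -> 0 <= w i t.
Proof.
move=> t0 i ip.
have penalty0 : penalty 0 = 0.
  rewrite penaltyE big1 // => j _.
  by apply/eqP; rewrite sqr_negpart_eq0; exact: w0_ge0.
have := gronwall t0 penalty_is_derive dpenalty_le.
rewrite penalty0 mulr0 => penalty_le0.
rewrite -sqr_negpart_eq0 eq_le sqr_negpart_ge0 andbT.
exact: le_trans (sqr_negpart_le_penalty i t ip) penalty_le0.
Qed.

End ChainComparison.

Section Amx.
Context {R : realType} {p : nat} (delta : nat -> R) (v : 'cV[R]_p.+1).

Lemma Amx_mul_shift i : (i.+1 < p)%N ->
  (Amx p delta *m v) (inord i) ord0 = v (inord i.+1) ord0.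
Proof.
move=> ip; have ip1 : (i < p.+1)%N by lia.
rewrite mxE (bigD1 (inord i.+1)) //= big1 ?addr0.
  by rewrite mxE !inordK ?ip ?eqxx ?mul1r //; lia.
move=> k k_neq; rewrite mxE inordK // ip.
case: eqP => [k_eq|]; last by rewrite mul0r.
by move: k_neq; rewrite -k_eq inord_val eqxx.
Qed.

Lemma Amx_mul_last : (0 < p)%N ->
  (Amx p delta *m v) (inord p.-1) ord0 = \sum_(j < p) delta j * v (inord j) ord0 + v ord_max ord0.
Proof.
move=> p_gt0; have Arow j : Amx p delta (inord p.-1) j = if (j < p)%N then delta j else 1.
  by rewrite mxE inordK ?prednK ?ltnn ?eqxx // ltnW // ltn_predL.
rewrite mxE big_ord_recr /= Arow ltnn mul1r; congr (_ + _).
apply: eq_bigr => j _; rewrite Arow /= ltn_ord; congr (_ * v _ _).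
by apply: val_inj; rewrite /= inordK // (ltn_trans (ltn_ord j)).
Qed.

Lemma Amx_mul_bottom : (0 < p)%N -> (Amx p delta *m v) ord_max ord0 = 0.
Proof.
move=> p_gt0; rewrite mxE big1 // => k _.
by rewrite mxE /= ltnNge leqnSn /= (_ : (p == p.-1) = false) ?mul0r //; apply/eqP; lia.
Qed.

End Amx.

Lemma is_derive_mx_entry {R : realType} {V : normedModType R} {m n}
    {M : V -> 'M[R]_(m, n)} {x v dM} i j :
  is_derive x v M dM -> is_derive x v (fun y => M y i j) (dM i j).
Proof.
move=> [dM_ex <-]; apply: DeriveDef; first exact: (derivable_mxP _ _ _).1 dM_ex i j.
by rewrite (derive_mx dM_ex) mxE.
Qed.

Theorem lemma2 (R : realType) (n p : nat) (F : 'rV[R]_n -> 'rV[R]_n)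
  (phi : 'rV[R]_n -> R) (d : R) (delta : nat -> R) :
  smooth F -> smooth phi -> (1 <= p)%N -> 0 < d ->
  (forall i, (i <= p)%N -> 0 <= delta i) ->
  (forall z, Omega n d z ->
     Lie_iter F phi p z <= \sum_(i < p) delta i * Lie_iter F phi i z + delta p) ->
  forall (xi0 : 'rV[R]_n), Omega n d xi0 ->
  (* xi : a solution of xi' = F(xi), xi(0) = xi0, staying in Omega_d on [0, t]
     (i.e. t < tau_{xi0}) *)
  forall (xi : R -> 'rV[R]_n) (t : R), 0 <= t ->
  xi 0 = xi0 ->
  (forall s : R, 0 <= s <= t -> is_derive s (1 : R) xi (F (xi s)) /\ Omega n d (xi s)) ->
  (* psi : the solution of psi' = A psi, psi(0) = y(xi0), i.e. psi s = e^{As} y *)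
  forall psi : R -> 'cV[R]_(p.+1),
  psi 0 = yvec p delta F phi xi0 ->
  (forall s : R, is_derive s (1 : R) psi (Amx p delta *m psi s)) ->
  phi (xi t) <= psi t ord0 ord0.
Proof.
move=> sF sphi p_gt0 _ delta_ge0 Lie_le xi0 _ xi t t_ge0 xi_0 xi_sol psi psi_0 psi_sol.
pose u i r := psi r (inord i) ord0.
have psi_last r : psi r ord_max ord0 = delta p.
  have last_cst (s : R) : is_derive s 1 (fun r => psi r ord_max ord0) 0.
    by rewrite -(Amx_mul_bottom delta (psi s) p_gt0); exact: is_derive_mx_entry.
  by rewrite (is_derive_0_is_cst r 0 last_cst) psi_0 mxE /= ltnn.
suff : 0 <= u 0%N t - Lie_iter F phi 0 (xi t).
  by rewrite subr_ge0 /u (_ : inord 0 = ord0) //; apply: val_inj; rewrite /= inordK.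
apply: (@chain_comparison R p delta (fun i r => u i r - Lie_iter F phi i (xi r))
  (fun i r => (Amx p delta *m psi r) (inord i) ord0 - Lie_iter F phi i.+1 (xi r)) t
  _ _ _ _ _ t_ge0 0 p_gt0).
- by move=> j jp; exact/delta_ge0/ltnW.
- move=> i r _ rt.
  exact: is_deriveB (is_derive_mx_entry (inord i) ord0 (psi_sol r))
                    (is_derive_Lie_iter_comp i sF sphi (xi_sol r rt).1).
- by move=> i r ip _; rewrite Amx_mul_shift.
- move=> r rt; rewrite Amx_mul_last // psi_last prednK //.
  under eq_bigr do rewrite mulrBr.
  have := Lie_le _ (xi_sol r rt).2.
  rewrite sumrB /u; lra.
- move=> i ip; rewrite /u psi_0 mxE inordK; last lia.
  by rewrite ip xi_0 subrr.
Qed.
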